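(* Let $S$ be an MLD-set of a graph $G$, and let $u\in S$ and $x\in V(G)\setminus S$ be such that the pair $\{u,x\}$ is not doubly resolved by $S$. Then $N(x)\cap S=\{u\}$, and $x$ is the only vertex $x'\in V(G)\setminus S$ such that $\{u,x'\}$ is not doubly resolved by $S$.
   Context: All graphs are finite, simple, undirected and connected; $d(u,v)$ is the shortest-path distance and $N(x)$ the open neighborhood of $x$. A set $S\subseteq V(G)$ is resolving if for all distinct $x,y\in V(G)$ there is $u\in S$ with $d(u,x)\ne d(u,y)$; dominating if every vertex not in $S$ has a neighbor in $S$. An MLD-set is a set both resolving and dominating. Two vertices $u,v$ doubly resolve a pair $\{x,y\}$ if $d(u,x)-d(u,y)\ne d(v,x)-d(v,y)$; a set $S$ doubly resolves $\{x,y\}$ if some two vertices of $S$ doubly resolve it. *)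

From mathcomp Require Import all_boot all_order all_algebra.
Import GRing.Theory.
Set Implicit Arguments. Unset Strict Implicit. Unset Printing Implicit Defensive.

Section Graph.
Variable T : finType.
Variable e : rel T.

Definition simple_graph : Prop := symmetric e /\ irreflexive e.
Definition connected_graph : Prop := forall x y : T, connect e x y.

Definition nbhd (x : T) : {set T} := [set y | e x y].

Fixpoint ball (u : T) (n : nat) : {set T} :=
  match n with
  | 0 => [set u]
  | n'.+1 => ball u n' :|: [set y | [exists z in ball u n', e z y]]
  end.

(* shortest-path distance: least n with v in ball u n
   (every distance in a connected graph on T is < #|T|) *)
Definition dist (u v : T) : nat := find (fun n => v \in ball u n) (iota 0 #|T|).

Definition resolving (S : {set T}) : Prop :=
  forall x y : T, x != y -> exists2 u, u \in S & dist u x != dist u y.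

Definition dominating (S : {set T}) : Prop :=
  forall x : T, x \notin S -> exists2 y, y \in S & e x y.

Definition MLD_set (S : {set T}) : Prop := resolving S /\ dominating S.

Definition doubly_resolves (u v x y : T) : Prop :=
  (Posz (dist u x) - Posz (dist u y) != Posz (dist v x) - Posz (dist v y))%R.

Definition set_doubly_resolves (S : {set T}) (x y : T) : Prop :=
  exists u v, [/\ u \in S, v \in S & doubly_resolves u v x y].
End Graph.

(* If S does not doubly resolve {u, x} with u in S, then the pair (s, u) gives
   d(s, x) = d(s, u) + d(u, x) for every s in S.  Taking for s a neighbour of x
   in S (which exists since S dominates and x is not in S) forces s = u and
   d(u, x) = 1.  Hence every such x has the distance vector d(s, x) = d(s, u) + 1
   on S, and since S is resolving there is only one of them. *)
From mathcomp Require Import all_boot all_order all_algebra.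
From mathcomp Require Import zify.

Set Implicit Arguments.
Unset Strict Implicit.
Unset Printing Implicit Defensive.

Section Distance.
Variables (T : finType) (e : rel T).

Lemma card_succ (u : T) : exists n, #|T| = n.+1.
Proof.
have : 0 < #|T| by apply/card_gt0P; exists u.
by case: #|T| => // n _; exists n.
Qed.

Lemma dist_refl (u : T) : dist e u u = 0.
Proof. by rewrite /dist; have [n ->] := card_succ u; rewrite /= inE eqxx. Qed.

Lemma dist_eq0 (u v : T) : dist e u v = 0 -> v = u.
Proof. by rewrite /dist; have [n ->] := card_succ u; rewrite /= inE; case: eqP. Qed.

Lemma dist_edge (y x : T) : e y x -> y != x -> dist e y x = 1.
Proof.
move=> yx neq_yx.
have : 1 < #|T| by have := max_card [set y; x]; rewrite cards2 neq_yx.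
rewrite /dist; case: #|T| => [|[|n]] // _.
rewrite /= !inE eq_sym (negbTE neq_yx) /=.
suff -> : [exists z in [set y], e z x] by [].
by apply/existsP; exists y; rewrite inE eqxx.
Qed.

Lemma resolving_eq (S : {set T}) (x y : T) : resolving e S ->
  {in S, forall s, dist e s x = dist e s y} -> x = y.
Proof.
move=> resS eq_dist; apply/eqP/negPn/negP => /resS [s sS].
by rewrite eq_dist ?eqxx.
Qed.

Variables (S : {set T}) (u x : T).
Hypotheses (uS : u \in S) (x_undoubled : ~ set_doubly_resolves e S u x).

Lemma undoubled_distD : {in S, forall s, dist e s x = dist e s u + dist e u x}.
Proof.
move=> s sS; have : ~ doubly_resolves e s u u x by move=> dr; apply: x_undoubled; exists s, u.
by rewrite /doubly_resolves dist_refl => /negP; rewrite negbK => /eqP; lia.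
Qed.

Lemma undoubled_nbhd (y : T) : symmetric e -> x \notin S -> y \in S -> e x y ->
  y = u /\ dist e u x = 1.
Proof.
move=> e_sym xS yS xy.
have neq_yx : y != x by apply: contraNneq xS => <-.
have neq_xu : x != u by apply: contraNneq xS => ->.
have dist_ux : dist e u x != 0 by apply: contra neq_xu => /eqP/dist_eq0/eqP.
have yx : e y x by rewrite e_sym.
have := undoubled_distD yS; rewrite dist_edge // => dist_yx.
have dist_yu : dist e y u = 0 by lia.
by split; [exact/esym/dist_eq0 | lia].
Qed.

End Distance.

Theorem lemma8 (T : finType) (e : rel T) (S : {set T}) (u x : T) :
  simple_graph e -> connected_graph e ->
  MLD_set e S -> u \in S -> x \notin S ->
  ~ set_doubly_resolves e S u x ->
  nbhd e x :&: S = [set u] /\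
  (forall x' : T, x' \notin S -> ~ set_doubly_resolves e S u x' -> x' = x).
Proof.
move=> [e_sym _] _ [resS domS] uS xS ndx.
have dist_ux (z : T) : z \notin S -> ~ set_doubly_resolves e S u z -> dist e u z = 1.
  move=> zS ndz; have [y yS zy] := domS z zS.
  by have [] := undoubled_nbhd uS ndz e_sym zS yS zy.
split.
  apply/setP => y; rewrite !inE; apply/andP/eqP => [[xy yS]|->].
    by have [] := undoubled_nbhd uS ndx e_sym xS yS xy.
  by have [z zS xz] := domS x xS; have [<-] := undoubled_nbhd uS ndx e_sym xS zS xz.
move=> x' x'S ndx'; apply: (resolving_eq resS) => s sS.
by rewrite (undoubled_distD uS ndx sS) (undoubled_distD uS ndx' sS) !dist_ux.
Qed.
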